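(* For a read-once Boolean function $f$ the following are equivalent: (1) $f$ is linear read-once; (2) $f$ is a Chow function; (3) no restriction of $f$ equals, up to renaming of variables, $g_1(x,y,z,u)=(x\vee y)\wedge(z\vee u)$, $g_2(x,y,z,u)=(x\wedge y)\vee(z\wedge u)$, or any function obtained from $g_1$ or $g_2$ by negating some of its variables.
   Context: Read-once: representable by a formula over $\wedge,\vee,\neg$ in which every variable appears at most once. Linear read-once (lro): constant, or representable by a nested formula, where literals $x,\overline{x}$ are nested and $x\vee t$, $x\wedge t$, $\overline{x}\vee t$, $\overline{x}\wedge t$ are nested whenever $t$ is nested and contains neither $x$ nor $\overline{x}$. Chow parameters of $f(x_1,\ldots,x_n)$: $(w_1(f),\ldots,w_n(f),w(f))$, with $w(f)$ the number of true points and $w_i(f)$ the number of true points with $x_i=1$; $f$ is Chow if no other function of the same variables has the same Chow parameters. A restriction of $f$ is obtained by fixing some variables to constants. *)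

From mathcomp Require Import all_boot.
Set Implicit Arguments. Unset Strict Implicit. Unset Printing Implicit Defensive.

Definition bvec (n : nat) := {ffun 'I_n -> bool}.
Definition boolfun (n : nat) := {ffun bvec n -> bool}.

Inductive form (n : nat) : Type :=
| FConst of bool
| FVar of 'I_n
| FNeg of form n
| FAnd of form n & form n
| FOr of form n & form n.

Fixpoint feval n (phi : form n) (x : bvec n) : bool :=
  match phi with
  | FConst b => b
  | FVar i => x i
  | FNeg p => ~~ feval p x
  | FAnd p q => feval p x && feval q x
  | FOr p q => feval p x || feval q x
  end.

Fixpoint fvars n (phi : form n) : seq 'I_n :=
  match phi with
  | FConst _ => [::]
  | FVar i => [:: i]
  | FNeg p => fvars p
  | FAnd p q => fvars p ++ fvars q
  | FOr p q => fvars p ++ fvars q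
  end.

Definition represents n (phi : form n) (f : boolfun n) : Prop :=
  forall x, f x = feval phi x.

Definition read_once n (f : boolfun n) : Prop :=
  exists phi : form n, uniq (fvars phi) /\ represents phi f.

Inductive nested n : form n -> Prop :=
| nest_pos i : nested (FVar i)
| nest_neg i : nested (FNeg (FVar i))
| nest_or_pos i t : nested t -> i \notin fvars t -> nested (FOr (FVar i) t)
| nest_and_pos i t : nested t -> i \notin fvars t -> nested (FAnd (FVar i) t)
| nest_or_neg i t : nested t -> i \notin fvars t -> nested (FOr (FNeg (FVar i)) t)
| nest_and_neg i t : nested t -> i \notin fvars t -> nested (FAnd (FNeg (FVar i)) t).

Definition is_const n (f : boolfun n) : Prop := exists b, forall x, f x = b.

Definition linear_read_once n (f : boolfun n) : Prop :=
  is_const f \/ exists t : form n, nested t /\ represents t f.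

Definition chow_w n (f : boolfun n) : nat := #|[set x | f x]|.
Definition chow_wi n (f : boolfun n) (i : 'I_n) : nat := #|[set x | f x && x i]|.

Definition chow n (f : boolfun n) : Prop :=
  forall g : boolfun n,
    (forall i, chow_wi g i = chow_wi f i) -> chow_w g = chow_w f -> g = f.

(* The point of {0,1}^n obtained by putting y_k into variable sigma k and
   the constant c j into every other variable j. *)
Definition plug n (sigma : 'I_4 -> 'I_n) (c : bvec n) (y : bvec 4) : bvec n :=
  [ffun j => match [pick k : 'I_4 | sigma k == j] with
             | Some k => y k
             | None => c j
             end].

Definition g1 (y : bvec 4) : bool :=
  (y (inord 0) || y (inord 1)) && (y (inord 2) || y (inord 3)).
Definition g2 (y : bvec 4) : bool :=
  (y (inord 0) && y (inord 1)) || (y (inord 2) && y (inord 3)).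

Definition negvars (s y : bvec 4) : bvec 4 := [ffun k => y k (+) s k].

Definition has_restriction_to n (f : boolfun n) (g : bvec 4 -> bool) : Prop :=
  exists (sigma : 'I_4 -> 'I_n) (c : bvec n) (s : bvec 4),
    injective sigma /\ forall y : bvec 4, f (plug sigma c y) = g (negvars s y).

Definition no_forbidden_restriction n (f : boolfun n) : Prop :=
  ~ has_restriction_to f g1 /\ ~ has_restriction_to f g2.

(* (1) -> (2): a nested formula x_i o t is a threshold function whose threshold
   is never attained: give x_i a weight larger than the total weight of t.  A
   threshold function f is determined by its Chow parameters, since for any g with
   the same parameters sum_x (f x - g x) (w.x - T) = 0 while every term is >= 0.
   (2) -> (3): a forbidden restriction yields points a, b with f = 1 and c, d with
   f = 0 and a + b = c + d; moving the true values from a, b to c, d changes no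
   Chow parameter.
   (3) -> (1): by induction on a read-once formula, every subformula is constant,
   nested, or has a forbidden restriction.  Two nested formulas on disjoint
   variables can be conjoined into a nested formula unless both contain a
   disjunction; then two independent restrictions to u \/ v give g1.
   Disjunctions reduce to conjunctions by De Morgan, which exchanges g1 and g2. *)

From mathcomp Require Import all_boot order ssralg ssrnum ssrint zify ring.
Import Order.TTheory GRing.Theory Num.Theory.
Set Implicit Arguments. Unset Strict Implicit. Unset Printing Implicit Defensive.

Section NestedFormulas.
Variable n : nat.
Implicit Types (h : bvec n -> bool) (V : seq 'I_n) (t : form n) (x c : bvec n).

Definition depends_on h V :=
  forall x x', (forall k, k \in V -> x k = x' k) -> h x = h x'.

Definition upd c (i : 'I_n) (v : bool) : bvec n :=
  [ffun k => if k == i then v else c k].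

Lemma upd_at c i v : upd c i v i = v.
Proof. by rewrite ffunE eqxx. Qed.

Lemma upd_comm c i j u v : i != j -> upd (upd c i u) j v = upd (upd c j v) i u.
Proof.
move=> ij; apply/ffunP => k; rewrite !ffunE.
by case: (eqVneq k j) => [->|//]; rewrite eq_sym (negbTE ij).
Qed.

Lemma depends_on_upd h V x i v : depends_on h V -> i \notin V -> h (upd x i v) = h x.
Proof.
move=> dh iV; apply: dh => k kV; rewrite ffunE; case: eqP => // eki.
by rewrite -eki kV in iV.
Qed.

Lemma depends_on_negb h V : depends_on h V -> depends_on (negb \o h) V.
Proof. by move=> dh x x' e /=; rewrite (dh x x'). Qed.

Lemma feval_depends_on t : depends_on (feval t) (fvars t).
Proof.
elim: t => [b|i|p IH|p IHp q IHq|p IHp q IHq] x x' e //=.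
- by apply: e; rewrite inE.
- by rewrite (IH x x').
- by rewrite (IHp x x') ?(IHq x x') // => k k_in; apply: e; rewrite mem_cat k_in ?orbT.
- by rewrite (IHp x x') ?(IHq x x') // => k k_in; apply: e; rewrite mem_cat k_in ?orbT.
Qed.

Lemma feval_upd t x i v : i \notin fvars t -> feval t (upd x i v) = feval t x.
Proof. exact: depends_on_upd (@feval_depends_on t). Qed.

(* [lit pos i] is the literal x_i if pos and its negation otherwise; the four
   nested constructors are merged into [nest isand pos i t]. *)
Definition lit pos i : form n := if pos then FVar i else FNeg (FVar i).

Definition nest (isand pos : bool) i t : form n :=
  if isand then FAnd (lit pos i) t else FOr (lit pos i) t.

Definition andor (isand : bool) : bool -> bool -> bool := if isand then andb else orb.

Definition neutral (isand pos : bool) := if isand then pos else ~~ pos.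

Lemma fvars_lit pos i : fvars (lit pos i) = [:: i].
Proof. by case: pos. Qed.

Lemma fvars_nest isand pos i t : fvars (nest isand pos i t) = i :: fvars t.
Proof. by case: isand; case: pos. Qed.

Lemma feval_lit pos i x : feval (lit pos i) x = (x i == pos).
Proof. by case: pos => /=; case: (x i). Qed.

Lemma feval_nest isand pos i t x :
  feval (nest isand pos i t) x = andor isand (x i == pos) (feval t x).
Proof. by case: isand; rewrite /= feval_lit. Qed.

Lemma nested_lit pos i : nested (lit pos i).
Proof. by case: pos; rewrite /lit; constructor. Qed.

Lemma nested_nest isand pos i t : nested t -> i \notin fvars t -> nested (nest isand pos i t).
Proof. by case: isand; case: pos; rewrite /nest /lit; constructor. Qed.

Lemma nested_nest_ind (P : form n -> Prop) :
  (forall pos i, P (lit pos i)) ->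
  (forall isand pos i t, nested t -> P t -> i \notin fvars t -> P (nest isand pos i t)) ->
  forall t, nested t -> P t.
Proof.
move=> Plit Pnest t; elim=> {t} [i|i|i t nt|i t nt|i t nt|i t nt].
- exact: (Plit true).
- exact: (Plit false).
- exact: (Pnest false true).
- exact: (Pnest true true).
- exact: (Pnest false false).
- exact: (Pnest true false).
Qed.

Lemma feval_nest_neutral isand pos i t x : i \notin fvars t ->
  feval (nest isand pos i t) (upd x i (neutral isand pos)) = feval t x.
Proof.
move=> it; rewrite feval_nest upd_at feval_upd //.
by case: isand; case: pos; rewrite /= ?eqxx.
Qed.

Lemma nested_negb t : nested t ->
  exists t', [/\ nested t', fvars t' = fvars t & feval t' =1 negb \o feval t].
Proof.
elim/nested_nest_ind => {t} [pos i|isand pos i t nt [t' [nt' e ht']] it].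
  exists (lit (~~ pos) i); split=> [||x]; first exact: nested_lit.
    by rewrite !fvars_lit.
  by rewrite /= !feval_lit; case: pos; case: (x i).
exists (nest (~~ isand) (~~ pos) i t'); split=> [||x].
- by apply: nested_nest; rewrite ?e.
- by rewrite !fvars_nest e.
- rewrite /= !feval_nest ht' /=.
  by case: isand; case: pos; case: (x i); case: (feval t x).
Qed.

Lemma nested_literal_restriction t : nested t ->
  exists j b c, j \in fvars t /\ forall v, feval t (upd c j v) = (v == b).
Proof.
elim/nested_nest_ind => {t} [pos i|isand pos i t nt [j [b [c [jt hj]]]] it].
  exists i, pos, [ffun => false]; split; first by rewrite fvars_lit mem_head.
  by move=> v; rewrite feval_lit upd_at.
exists j, b, (upd c i (neutral isand pos)); split; first by rewrite fvars_nest inE jt orbT.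
have ij : i != j by apply: contraNneq it => ->.
by move=> v; rewrite upd_comm // feval_nest_neutral.
Qed.

Definition or2_restriction h V := exists i j c a b, [/\ i != j, i \in V, j \in V &
  forall u v, h (upd (upd c i u) j v) = (u == a) || (v == b)].

Lemma or2_restriction_nest isand pos i t : i \notin fvars t ->
  or2_restriction (feval t) (fvars t) ->
  or2_restriction (feval (nest isand pos i t)) (fvars (nest isand pos i t)).
Proof.
move=> it [i1 [j1 [c [a [b [ij i1t j1t hc]]]]]].
exists i1, j1, (upd c i (neutral isand pos)), a, b.
split; rewrite ?fvars_nest ?inE ?i1t ?j1t ?orbT //.
have ii1 : i != i1 by apply: contraNneq it => ->.
have ij1 : i != j1 by apply: contraNneq it => ->.
by move=> u v; rewrite (upd_comm _ _ _ ii1) (upd_comm _ _ _ ij1) feval_nest_neutral.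
Qed.

Definition and_nestable t1 := forall t2, nested t2 -> [disjoint fvars t1 & fvars t2] ->
  exists t, [/\ nested t, {subset fvars t <= fvars t1 ++ fvars t2} &
                feval t =1 (fun x => feval t1 x && feval t2 x)].

(* Either all connectives are conjunctions, or the outermost disjunction
   x_i \/ t gives an or2 restriction on x_i and a variable of t. *)
Lemma nested_and_nestable_or_or2 t : nested t ->
  and_nestable t \/ or2_restriction (feval t) (fvars t).
Proof.
elim/nested_nest_ind => {t} [pos i|isand pos i t nt IH it].
  left=> t2 nt2; rewrite fvars_lit disjoint_cons => /andP[it2 _].
  exists (nest true pos i t2); split; first exact: nested_nest.
    by move=> k; rewrite fvars_nest.
  by move=> x; rewrite feval_nest feval_lit.
case: isand.
  case: IH => [IH|or2]; last by right; apply: or2_restriction_nest.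
  left=> t2 nt2; rewrite fvars_nest disjoint_cons => /andP[it2 dis].
  have [t' [nt' sub e]] := IH t2 nt2 dis.
  exists (nest true pos i t'); split.
  - apply: nested_nest => //; apply/negP => /sub.
    by rewrite mem_cat (negbTE it) (negbTE it2).
  - move=> k; rewrite fvars_nest inE => /orP[/eqP->|/sub]; first exact: mem_head.
    by rewrite /= inE => ->; rewrite orbT.
  - by move=> x; rewrite !feval_nest e /= andbA.
right; have [j [b [c [jt hj]]]] := nested_literal_restriction nt.
have ij : i != j by apply: contraNneq it => ->.
exists i, j, c, pos, b; split; rewrite ?fvars_nest ?mem_head ?inE ?jt ?orbT //.
by move=> u v; rewrite upd_comm // feval_nest upd_at feval_upd // hj.
Qed.

End NestedFormulas.

Section ForbiddenRestrictions.
Variable n : nat.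
Implicit Types (h : bvec n -> bool) (V : seq 'I_n) (x c : bvec n) (sigma : 'I_4 -> 'I_n).

Lemma plug_image sigma c y k : injective sigma -> plug sigma c y (sigma k) = y k.
Proof.
move=> inj; rewrite ffunE; case: pickP => [k' /eqP/inj -> // | /(_ k)].
by rewrite eqxx.
Qed.

Lemma plug_notin_image sigma c y j : (forall k, sigma k != j) -> plug sigma c y j = c j.
Proof. by move=> nj; rewrite ffunE; case: pickP => [k /eqP ek|//]; case/eqP: (nj k). Qed.

Lemma plug_const_eq sigma c c' y j : c j = c' j -> plug sigma c y j = plug sigma c' y j.
Proof. by move=> e; rewrite !ffunE; case: pickP. Qed.

Lemma negvarsK s : involutive (negvars s).
Proof. by move=> y; apply/ffunP => k; rewrite !ffunE addbK. Qed.

Definition forbidden_on (g : bvec 4 -> bool) h V := exists sigma c s,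
  [/\ injective sigma, forall k, sigma k \in V & forall y, h (plug sigma c y) = g (negvars s y)].

Definition forbidden h V := forbidden_on g1 h V \/ forbidden_on g2 h V.

Lemma forbidden_on_sub g h V W : forbidden_on g h V -> {subset V <= W} -> forbidden_on g h W.
Proof. by move=> [sg [c [s [inj sV e]]]] VW; exists sg, c, s; split => // k; apply: VW. Qed.

Lemma forbidden_on_eq g h h' V : forbidden_on g h V -> h =1 h' -> forbidden_on g h' V.
Proof. by move=> [sg [c [s [inj sV e]]]] hh'; exists sg, c, s; split => // y; rewrite -hh'. Qed.

(* Fix the variables of the second conjunct to a satisfying point. *)
Lemma forbidden_on_and g h1 h2 V1 V2 p :
  forbidden_on g h1 V1 -> depends_on h1 V1 -> depends_on h2 V2 -> [disjoint V1 & V2] ->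
  h2 p -> forbidden_on g (fun x => h1 x && h2 x) (V1 ++ V2).
Proof.
move=> [sg [c [s [inj sV e]]]] d1 d2 dis h2p.
exists sg, [ffun k => if k \in V2 then p k else c k], s; split => //.
  by move=> k; rewrite mem_cat sV.
move=> y; rewrite -e -[RHS]andbT; congr (_ && _).
  apply: d1 => k kV; apply: plug_const_eq; by rewrite ffunE (disjointFr dis kV).
rewrite -h2p; apply: d2 => k kV; rewrite plug_notin_image ?ffunE ?kV //.
by move=> m; apply: contraTneq kV => <-; rewrite (disjointFr dis (sV m)).
Qed.

Lemma forbidden_on_sat g h V : forbidden_on g h V -> g [ffun => true] -> exists p, h p.
Proof.
move=> [sg [c [s [_ _ e]]]] gT.
by exists (plug sg c (negvars s [ffun => true])); rewrite e negvarsK.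
Qed.

(* Negating all variables and the value exchanges g1 and g2. *)
Lemma forbidden_negb h V : forbidden h V -> forbidden (negb \o h) V.
Proof.
case=> [[sg [c [s [inj sV e]]]]|[sg [c [s [inj sV e]]]]]; [right|left];
  exists sg, c, [ffun k => ~~ s k]; split => // y; rewrite /= e /g1 /g2 !ffunE !addbN;
  by case: (_ (+) _); case: (_ (+) _); case: (_ (+) _); case: (_ (+) _).
Qed.

Lemma or2_restriction_eval h V i j c a b x :
  depends_on h V -> (forall u v, h (upd (upd c i u) j v) = (u == a) || (v == b)) ->
  (forall k, k \in V -> k != i -> k != j -> x k = c k) -> h x = (x i == a) || (x j == b).
Proof.
move=> dh hc xc; rewrite -hc; apply: dh => k kV; rewrite !ffunE.
by case: (eqVneq k j) => [->//|kj]; case: (eqVneq k i) => [->//|ki]; apply: xc.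
Qed.

(* Two independent restrictions to (u == a) || (v == b) give g1 with the negation
   pattern (~~ a1, ~~ b1, ~~ a2, ~~ b2). *)
Lemma or2_restriction_and_forbidden h1 h2 V1 V2 :
  or2_restriction h1 V1 -> or2_restriction h2 V2 ->
  depends_on h1 V1 -> depends_on h2 V2 -> [disjoint V1 & V2] ->
  forbidden_on g1 (fun x => h1 x && h2 x) (V1 ++ V2).
Proof.
move=> [i1 [j1 [c1 [a1 [b1 [ij1 i1V j1V hc1]]]]]] [i2 [j2 [c2 [a2 [b2 [ij2 i2V j2V hc2]]]]]].
move=> d1 d2 dis.
pose l := [:: i1; j1; i2; j2].
have neqV k k' : k \in V1 -> k' \in V2 -> k != k'.
  by move=> kV; apply: contraTneq => <-; rewrite (disjointFr dis kV).
have ul : uniq l by rewrite /l /= !inE !negb_or ij1 ij2 !neqV.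
pose sg (k : 'I_4) := nth i1 l k.
have inj : injective sg.
  by move=> k k' /eqP; rewrite /sg nth_uniq // => /eqP; apply: ord_inj.
have sl m : sg m \in l by apply: mem_nth.
have [s0 s1 s2 s3] : [/\ sg (inord 0) = i1, sg (inord 1) = j1, sg (inord 2) = i2 &
    sg (inord 3) = j2] by rewrite /sg !inordK.
pose cc := [ffun k => if k \in V1 then c1 k else c2 k].
exists sg, cc, [ffun k : 'I_4 => nth false [:: ~~ a1; ~~ b1; ~~ a2; ~~ b2] k].
split => //.
  move=> m; have := sl m; rewrite !inE mem_cat.
  by case/or4P => /eqP->; rewrite ?i1V ?j1V ?i2V ?j2V ?orbT.
move=> y; rewrite /g1 !ffunE !inordK //= !addbN !negb_add.
rewrite -!(plug_image cc y _ inj) s0 s1 s2 s3; congr (_ && _).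
  apply: (or2_restriction_eval d1 hc1) => k kV ki kj.
  rewrite plug_notin_image ?ffunE ?kV // => m; apply: contraTneq (sl m) => ->.
  by rewrite !inE (negbTE ki) (negbTE kj) !(negbTE (neqV _ _ kV _)).
apply: (or2_restriction_eval d2 hc2) => k kV ki kj.
have kV1 : k \in V1 = false by apply: (disjointFl dis).
rewrite plug_notin_image ?ffunE ?kV1 // => m; apply: contraTneq (sl m) => ->.
by rewrite !inE (negbTE ki) (negbTE kj) !(eq_sym k) !(negbTE (neqV _ _ _ kV)).
Qed.

End ForbiddenRestrictions.

Section ReadOnceInduction.
Variable n : nat.
Implicit Types (h : bvec n -> bool) (V : seq 'I_n) (t : form n).

Definition lro_or_forbidden h V :=
  [\/ exists b, h =1 fun=> b,
      exists t, [/\ nested t, {subset fvars t <= V} & h =1 feval t]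
    | forbidden h V].

Lemma lro_or_forbidden_eq h h' V : lro_or_forbidden h V -> h =1 h' -> lro_or_forbidden h' V.
Proof.
move=> [[b hb]|[t [nt tV ht]]|[F|F]] hh'.
- by apply: Or31; exists b => x; rewrite -hh'.
- by apply: Or32; exists t; split => // x; rewrite -hh'.
- by apply/Or33/or_introl/(forbidden_on_eq F).
- by apply/Or33/or_intror/(forbidden_on_eq F).
Qed.

Lemma lro_or_forbidden_sub h V W : lro_or_forbidden h V -> {subset V <= W} ->
  lro_or_forbidden h W.
Proof.
move=> [[b hb]|[t [nt tV ht]]|[F|F]] VW.
- by apply: Or31; exists b.
- by apply: Or32; exists t; split => // k /tV /VW.
- by apply/Or33/or_introl/(forbidden_on_sub F).
- by apply/Or33/or_intror/(forbidden_on_sub F).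
Qed.

Lemma lro_or_forbidden_negb h V : lro_or_forbidden h V -> lro_or_forbidden (negb \o h) V.
Proof.
move=> [[b hb]|[t [nt tV ht]]|F].
- by apply: Or31; exists (~~ b) => x /=; rewrite hb.
- have [t' [nt' e ht']] := nested_negb nt.
  by apply: Or32; exists t'; split => [//|k|x]; rewrite ?e ?ht' /= ?ht //; apply: tV.
- exact/Or33/forbidden_negb.
Qed.

Lemma lro_or_forbidden_sat h V : lro_or_forbidden h V -> (exists p, h p) \/ h =1 fun=> false.
Proof.
move=> [[[] hb]|[t [nt _ ht]]|[F|F]].
- by left; exists [ffun => true].
- by right.
- left; have [j [b [c [_ hj]]]] := nested_literal_restriction nt.
  by exists (upd c j b); rewrite ht hj eqxx.
- by left; apply: forbidden_on_sat F _; rewrite /g1 !ffunE.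
- by left; apply: forbidden_on_sat F _; rewrite /g2 !ffunE.
Qed.

Lemma lro_or_forbidden_andC h1 h2 V1 V2 :
  lro_or_forbidden (fun x => h2 x && h1 x) (V2 ++ V1) ->
  lro_or_forbidden (fun x => h1 x && h2 x) (V1 ++ V2).
Proof.
move=> I; apply: lro_or_forbidden_sub (lro_or_forbidden_eq I _) _ => [x|k].
  exact: andbC.
by rewrite !mem_cat orbC.
Qed.

Lemma lro_or_forbidden_and_nested t1 t2 : nested t1 -> nested t2 ->
  [disjoint fvars t1 & fvars t2] ->
  lro_or_forbidden (fun x => feval t1 x && feval t2 x) (fvars t1 ++ fvars t2).
Proof.
move=> nt1 nt2 dis.
have [and1|or1] := nested_and_nestable_or_or2 nt1.
  have [t [nt sub e]] := and1 t2 nt2 dis.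
  by apply: Or32; exists t; split => // x; rewrite e.
have [and2|or2] := nested_and_nestable_or_or2 nt2.
  rewrite disjoint_sym in dis; have [t [nt sub e]] := and2 t1 nt1 dis.
  by apply/lro_or_forbidden_andC/Or32; exists t; split => // x; rewrite e.
by apply/Or33/or_introl/or2_restriction_and_forbidden => //; apply: feval_depends_on.
Qed.

Lemma lro_or_forbidden_and_degenerate h1 h2 V1 V2 :
  (exists b, h1 =1 fun=> b) \/ forbidden h1 V1 -> lro_or_forbidden h2 V2 ->
  depends_on h1 V1 -> depends_on h2 V2 -> [disjoint V1 & V2] ->
  lro_or_forbidden (fun x => h1 x && h2 x) (V1 ++ V2).
Proof.
move=> [[[] hb]|F] I2 d1 d2 dis.
- apply: lro_or_forbidden_sub (lro_or_forbidden_eq I2 _) _ => [x|k k2].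
    by rewrite hb.
  by rewrite mem_cat k2 orbT.
- by apply: Or31; exists false => x; rewrite hb.
have [[p h2p]|h2F] := lro_or_forbidden_sat I2.
  by apply: Or33; case: F => F; [left|right]; apply: forbidden_on_and F d1 d2 dis h2p.
by apply: Or31; exists false => x; rewrite h2F andbF.
Qed.

Lemma lro_or_forbidden_and h1 h2 V1 V2 :
  lro_or_forbidden h1 V1 -> lro_or_forbidden h2 V2 ->
  depends_on h1 V1 -> depends_on h2 V2 -> [disjoint V1 & V2] ->
  lro_or_forbidden (fun x => h1 x && h2 x) (V1 ++ V2).
Proof.
move=> I1 I2 d1 d2 dis.
have dis' : [disjoint V2 & V1] by rewrite disjoint_sym.
case: I1 => [C1|N1|F1]; last by apply: lro_or_forbidden_and_degenerate => //; right.
  by apply: lro_or_forbidden_and_degenerate => //; left.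
case: I2 => [C2|N2|F2];
  [ by apply/lro_or_forbidden_andC/lro_or_forbidden_and_degenerate => //; [left|apply: Or32]
  | idtac
  | by apply/lro_or_forbidden_andC/lro_or_forbidden_and_degenerate => //; [right|apply: Or32]].
move: N1 N2 => [t1 [nt1 sub1 e1]] [t2 [nt2 sub2 e2]].
apply: lro_or_forbidden_sub (lro_or_forbidden_eq (lro_or_forbidden_and_nested nt1 nt2 _) _) _.
- exact: disjointW (introT subsetP sub1) (introT subsetP sub2) dis.
- by move=> x; rewrite e1 e2.
- by move=> k; rewrite !mem_cat => /orP[/sub1|/sub2] ->; rewrite ?orbT.
Qed.

Lemma read_once_lro_or_forbidden t : uniq (fvars t) -> lro_or_forbidden (feval t) (fvars t).
Proof.
have dis (p q : form n) : uniq (fvars p ++ fvars q) -> [disjoint fvars p & fvars q].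
  by rewrite cat_uniq disjoint_sym disjoint_has => /and3P[].
elim: t => [b|i|p IH|p IHp q IHq|p IHp q IHq] /= u.
- by apply: Or31; exists b.
- by apply: Or32; exists (FVar i); split => //; constructor.
- exact: lro_or_forbidden_negb (IH u).
- move: (u); rewrite cat_uniq => /and3P[up _ uq].
  apply: lro_or_forbidden_eq (lro_or_forbidden_and (IHp up) (IHq uq) _ _ (dis _ _ u)) _ => //;
  exact: feval_depends_on.
- move: (u); rewrite cat_uniq => /and3P[up _ uq].
  apply: lro_or_forbidden_eq (lro_or_forbidden_negb (lro_or_forbidden_and
    (lro_or_forbidden_negb (IHp up)) (lro_or_forbidden_negb (IHq uq)) _ _ (dis _ _ u))) _.
  + exact/depends_on_negb/feval_depends_on.
  + exact/depends_on_negb/feval_depends_on.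
  + by move=> x /=; rewrite negb_and !negbK.
Qed.

End ReadOnceInduction.

Lemma read_once_no_forbidden_lro n (f : boolfun n) :
  read_once f -> no_forbidden_restriction f -> linear_read_once f.
Proof.
move=> [phi [u rf]] [N1 N2].
case: (read_once_lro_or_forbidden u) => [[b hb]|[t [nt _ ht]]|[[sg [c [s [inj _ e]]]]|[sg [c [s [inj _ e]]]]]].
- by left; exists b => x; rewrite rf hb.
- by right; exists t; split => // x; rewrite rf ht.
- by case: N1; exists sg, c, s; split => // y; rewrite rf e.
- by case: N2; exists sg, c, s; split => // y; rewrite rf e.
Qed.

Lemma card_set_sum (T : finType) (P : pred T) : #|[set x | P x]| = \sum_x P x.
Proof. by rewrite -sum1dep_card big_mkcond /=; apply: eq_bigr => x _; case: (P x). Qed.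

Lemma chow_w_sum n (f : boolfun n) : chow_w f = \sum_x f x.
Proof. exact: card_set_sum. Qed.

Lemma chow_wi_sum n (f : boolfun n) i : chow_wi f i = \sum_x f x * x i.
Proof. by rewrite /chow_wi card_set_sum; apply: eq_bigr => x _; rewrite mulnb. Qed.

Section SwapPoints.
Variables (n : nat) (f : boolfun n) (a b c d : bvec n).
Hypotheses (fa : f a) (fb : f b) (fc : ~~ f c) (fd : ~~ f d).
Hypothesis (abcd : forall i, a i + b i = c i + d i).

Let swapped : boolfun n := [ffun x => if (x == a) || (x == b) then false
  else if (x == c) || (x == d) then true else f x].

Let neq_tf x y : f x -> ~~ f y -> (x == y) = false.
Proof. by move=> fx fy; apply: contraNF fy => /eqP <-. Qed.

Let neq_ab : (a == b) = false.
Proof.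
apply: contraNF fc => /eqP eab; suff <- : a = c by [].
by apply/ffunP => i; move: (abcd i); rewrite -eab; case: (a i); case: (c i); case: (d i).
Qed.

Let neq_cd : (c == d) = false.
Proof.
apply: contraNF fc => /eqP ecd; suff -> : c = a by [].
by apply/ffunP => i; move: (abcd i); rewrite -ecd; case: (a i); case: (b i); case: (c i).
Qed.

Let swapped_sum (W : bvec n -> nat) : W a + W b = W c + W d ->
  \sum_x swapped x * W x = \sum_x f x * W x.
Proof.
move=> Wabcd.
have pt x : swapped x * W x + ((x == a) * W x + (x == b) * W x) =
            f x * W x + ((x == c) * W x + (x == d) * W x).
  rewrite ffunE; case: ifP => [/orP[]/eqP->|/norP[/negbTE-> /negbTE->]].
  - by rewrite eqxx fa neq_ab (neq_tf fa fc) (neq_tf fa fd) /= !mul0n !mul1n ?add0n ?addn0.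
  - by rewrite eqxx eq_sym neq_ab fb (neq_tf fb fc) (neq_tf fb fd) /= !mul0n !mul1n ?add0n ?addn0.
  case: ifP => [/orP[]/eqP->|/norP[/negbTE-> /negbTE->] //].
  - by rewrite eqxx neq_cd (negbTE fc) /= !mul0n !mul1n ?add0n ?addn0.
  - by rewrite eqxx eq_sym neq_cd (negbTE fd) /= !mul0n !mul1n ?add0n ?addn0.
have : \sum_x (swapped x * W x + ((x == a) * W x + (x == b) * W x)) =
       \sum_x (f x * W x + ((x == c) * W x + (x == d) * W x)).
  by apply: eq_bigr => x _; apply: pt.
rewrite !big_split /=.
have sum_eq (e : bvec n) : \sum_x (x == e) * W x = W e.
  by rewrite (bigD1 e) //= eqxx mul1n big1 ?addn0 // => x /negbTE ->.
by rewrite !sum_eq Wabcd => /addIn.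
Qed.

Lemma swap_points_not_chow : ~ chow f.
Proof.
move=> chow_f.
have : swapped = f.
  apply: chow_f => [i|]; first by rewrite !chow_wi_sum; apply: swapped_sum.
  have := @swapped_sum (fun=> 1) erefl.
  by rewrite !chow_w_sum; under eq_bigr do rewrite muln1; under [in X in _ = X -> _]eq_bigr do rewrite muln1.
by move/(congr1 (fun g : boolfun n => g a)); rewrite /= ffunE eqxx fa.
Qed.

End SwapPoints.

Definition pt4 (l : seq bool) : bvec 4 := [ffun k : 'I_4 => nth false l k].

(* The four points 1010, 0101 (where g1 is true, g2 false) and 1100, 0011
   (where g2 is true, g1 false) have equal coordinatewise sums. *)
Lemma restriction_not_chow n (f : boolfun n) (g : bvec 4 -> bool) :
  let A := pt4 [:: true; false; true; false] in let B := pt4 [:: false; true; false; true] in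
  let C := pt4 [:: true; true; false; false] in let D := pt4 [:: false; false; true; true] in
  [&& g A, g B, ~~ g C & ~~ g D] || [&& g C, g D, ~~ g A & ~~ g B] ->
  has_restriction_to f g -> ~ chow f.
Proof.
move=> A B C D hg [sigma [c [s [_ hf]]]].
pose X P := plug sigma c (negvars s P).
have fX P : f (X P) = g P by rewrite /X hf negvarsK.
have sumX i : X A i + X B i = X C i + X D i.
  rewrite /X !ffunE; case: pickP => [k _|_] //; rewrite !ffunE.
  by case: k => [[|[|[|[|?]]]] ?] //=; case: (s _).
case/orP: hg => /and4P[gA gB gC gD].
- by apply: (swap_points_not_chow (a := X A) (b := X B) (c := X C) (d := X D)); rewrite ?fX.
- by apply: (swap_points_not_chow (a := X C) (b := X D) (c := X A) (d := X B)); rewrite ?fX.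
Qed.

Lemma chow_no_forbidden n (f : boolfun n) : chow f -> no_forbidden_restriction f.
Proof.
by move=> chow_f; split => /restriction_not_chow; apply=> //; rewrite /g1 /g2 !ffunE !inordK.
Qed.

Section ThresholdFunctions.
Local Open Scope ring_scope.
Variable n : nat.
Implicit Types (w : 'I_n -> int) (T : int) (h : bvec n -> bool) (t : form n).

Definition excess w T (x : bvec n) : int := \sum_i w i * (x i : nat)%:Z - T.

Definition threshold w T h := forall x, excess w T x != 0 /\ h x = (0 < excess w T x).

Lemma threshold_eq w T h h' : threshold w T h -> h =1 h' -> threshold w T h'.
Proof. by move=> hT hh' x; rewrite -hh'. Qed.

Definition excess_bound w T : int := \sum_i `|w i| + `|T| + 1.

Lemma excess_lt_bound w T x : `|excess w T x| < excess_bound w T.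
Proof.
rewrite ltzD1; apply: le_trans (ler_normB _ _) _; apply: lerD => //.
apply: le_trans (ler_norm_sum _ _ _) _; apply: ler_sum => j _.
by rewrite normrM; case: (x j); rewrite ?mulr1 ?mulr0 ?normr0.
Qed.

Lemma threshold_const b : threshold (fun=> 0) (if b then -1 else 1) (fun=> b).
Proof.
move=> x; rewrite /excess big1 ?add0r => [|i _]; last by rewrite mul0r.
by case: b.
Qed.

Lemma threshold_extend w T h i (isand pos : bool) : w i = 0 -> threshold w T h ->
  threshold (fun j => if j == i then (if pos then 1 else -1) * excess_bound w T else w j)
            (T + ((isand : nat)%:Z - (~~ pos : nat)%:Z) * excess_bound w T)
            (fun x => andor isand (x i == pos) (h x)).
Proof.
move=> wi hT x; have [nz ->] := hT x; have := excess_lt_bound w T x.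
set M := excess_bound w T.
have -> : excess (fun j => if j == i then (if pos then 1 else -1) * M else w j)
    (T + ((isand : nat)%:Z - (~~ pos : nat)%:Z) * M) x =
    excess w T x + (if pos then 1 else -1) * M * (x i : nat)%:Z - ((isand : nat)%:Z - (~~ pos : nat)%:Z) * M.
  rewrite /excess (bigD1 i) // [in RHS](bigD1 i) //= eqxx wi mul0r add0r.
  rewrite (eq_bigr (fun j => w j * (x j : nat)%:Z)) => [|j /negbTE -> //].
  by ring.
move: (excess w T x) nz => e; rewrite ltr_norml.
by case: isand pos (x i) => [] [] [] /=; lia.
Qed.

Lemma nested_threshold t : nested t ->
  exists w T, (forall j, j \notin fvars t -> w j = 0) /\ threshold w T (feval t).
Proof.
elim/nested_nest_ind => {t} [pos i|isand pos i t nt [w [T [w0 hT]]] it].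
  eexists; eexists; split; last first.
    apply: threshold_eq (threshold_extend (i := i) false pos erefl (threshold_const false)) _ => //.
    by move=> x; rewrite feval_lit /= orbF.
  by move=> j; rewrite fvars_lit inE => /negbTE ->.
eexists; eexists; split; last first.
  apply: threshold_eq (threshold_extend isand pos (w0 i it) hT) _.
  by move=> x; rewrite feval_nest.
by move=> j; rewrite fvars_nest inE negb_or => /andP[/negbTE -> /w0].
Qed.

Lemma excess_sum (f : boolfun n) w T :
  \sum_x (f x : nat)%:Z * excess w T x = \sum_i w i * (chow_wi f i)%:Z - T * (chow_w f)%:Z.
Proof.
rewrite /excess; under eq_bigr do rewrite mulrBr mulr_sumr.
rewrite sumrB exchange_big /= chow_w_sum (big_morph Posz PoszD erefl) mulr_sumr.
congr (_ - _); last by apply: eq_bigr => x _; rewrite mulrC.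
apply: eq_bigr => i _; rewrite chow_wi_sum (big_morph Posz PoszD erefl) mulr_sumr.
by apply: eq_bigr => x _; rewrite PoszM mulrCA.
Qed.

Lemma threshold_chow (f : boolfun n) w T : threshold w T f -> chow f.
Proof.
move=> hT g eq_wi eq_w.
have sum0 : \sum_x ((f x : nat)%:Z - (g x : nat)%:Z) * excess w T x = 0.
  under eq_bigr do rewrite mulrBl.
  rewrite sumrB !excess_sum eq_w.
  suff -> : \sum_i w i * (chow_wi g i)%:Z = \sum_i w i * (chow_wi f i)%:Z by rewrite subrr.
  by apply: eq_bigr => i _; rewrite eq_wi.
have term_ge0 x : 0 <= ((f x : nat)%:Z - (g x : nat)%:Z) * excess w T x.
  have [_ ->] := hT x; case: (g x); case: ltrP => //= e_sgn; lia.
apply/ffunP => x; have /eqP := psumr_eq0P (fun x _ => term_ge0 x) sum0 (i := x) isT.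
rewrite mulf_eq0 (negbTE (hT x).1) orbF subr_eq0.
by case: (f x); case: (g x).
Qed.

Lemma lro_chow (f : boolfun n) : linear_read_once f -> chow f.
Proof.
case=> [[b fb]|[t [nt ft]]].
  by apply: (threshold_chow (threshold_eq (threshold_const b) _)) => x; rewrite fb.
have [w [T [_ hT]]] := nested_threshold nt.
by apply: (threshold_chow (threshold_eq hT _)) => x; rewrite ft.
Qed.

End ThresholdFunctions.

Theorem mainTheorem15 (n : nat) (f : boolfun n) :
  read_once f ->
  (linear_read_once f <-> chow f) /\ (chow f <-> no_forbidden_restriction f).
Proof.
move=> ro_f; have nf_lro := read_once_no_forbidden_lro ro_f.
split; split.
- exact: lro_chow.
- by move=> /chow_no_forbidden /nf_lro.
- exact: chow_no_forbidden.
- by move=> /nf_lro /lro_chow.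
Qed.
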